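(* Let $\mathbf{z}\in\mathrm{GF}(2)^{2\times 30}$ be arbitrary and define binary $6\times 30$ matrices $\mathbf{Z_1},\mathbf{Z_2},\mathbf{Z_3}$ by: rows 1–2 of $\mathbf{Z_1}$ equal $\mathbf{z}$; rows 3–4 of $\mathbf{Z_1}$ equal $f(\text{rows }1\text{–}2 \text{ of } \mathbf{Z_1})$; rows 5–6 of $\mathbf{Z_1}$ equal $f(\text{rows }3\text{–}4\text{ of }\mathbf{Z_1})$; $\mathbf{Z_2}=g(\mathbf{Z_1})$; $\mathbf{Z_3}=g(\mathbf{Z_2})$. Let $\mathbf{W_1},\mathbf{W_2},\mathbf{W_3}$ be the $10\times 30$ matrices selecting the coordinates of files $A$, $B$, $C$ respectively (i.e., $\mathbf{W_1}=[I_{10}\ 0\ 0]$, $\mathbf{W_2}=[0\ I_{10}\ 0]$, $\mathbf{W_3}=[0\ 0\ I_{10}]$). For $S,T\subseteq\{1,2,3\}$ let $\mathbf{M}(S,T)$ be the matrix obtained by stacking $\mathbf{W_j}$ for $j\in S$ and $\mathbf{Z_i}$ for $i\in T$. Then for any $S,S',T,T'\subseteq\{1,2,3\}$ with $|S|=|S'|$ and $|T|=|T'|$, we have $\operatorname{rank}\mathbf{M}(S,T)=\operatorname{rank}\mathbf{M}(S',T')$ over $\mathrm{GF}(2)$; equivalently, the joint entropies $H(\{W_j\}_{j\in S},\{Z_i\}_{i\in T})$ and $H(\{W_j\}_{j\in S'},\{Z_i\}_{i\in T'})$ are equal.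
   Context: Three files $A=W_1$, $B=W_2$, $C=W_3$ are each split into 10 subfiles $A_1,\dots,A_{10}$, $B_1,\dots,B_{10}$, $C_1,\dots,C_{10}$, all i.i.d. uniform bit strings of equal length; the information vector is $\mathbf{W}=[A_1,\dots,A_{10},B_1,\dots,B_{10},C_1,\dots,C_{10}]$, so coordinates $1$–$10$, $11$–$20$, $21$–$30$ correspond to $A$, $B$, $C$. A binary matrix $\mathbf{G}$ with 30 columns represents the linear code $\mathbf{G}\mathbf{W}^{T}$, and cache $Z_i$ is $\mathbf{Z_i}\mathbf{W}^T$, file $W_j$ is $\mathbf{W_j}\mathbf{W}^T$; the entropy of a collection of such variables equals the rank of the stacked generator matrices times the subfile size. Column operations on matrices with 30 columns (applied to each row): $f$ moves the coefficient of $A_i$ to the position of $B_i$, that of $B_i$ to $C_i$, that of $C_i$ to $A_i$ (for all $i=1,\dots,10$), i.e., it relabels files $A\mapsto B\mapsto C\mapsto A$; $g$ moves, within each file, the coefficient of subfile $i$ to subfile $i+3$ reduced into $\{1,\dots,9\}$ modulo 9 (so $1\mapsto4,\dots,6\mapsto 9, 7\mapsto1, 8\mapsto 2, 9\mapsto 3$) for $1\le i\le 9$, and fixes subfile $10$. For example, $f\circ g$ sends the row representing $A_2\oplus B_3\oplus C_9\oplus C_{10}$ to the row representing $B_5\oplus C_6\oplus A_3\oplus A_{10}$. *)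

From HB Require Import structures.
From mathcomp Require Import all_boot all_order all_algebra.
Set Implicit Arguments. Unset Strict Implicit. Unset Printing Implicit Defensive.
Import GRing.Theory.
Local Open Scope ring_scope.

(* Columns are 0-indexed: column k (0<=k<30) is subfile (k %% 10)+1 of file
   (k %/ 10) (0 = A, 1 = B, 2 = C).  The scalar field GF(2) is 'F_2. *)

(* f moves the coefficient in column k to column (k+10) mod 30, i.e. the new
   column k receives the old column (k+20) mod 30. *)
Definition f_src (k : 'I_30) : 'I_30 := inord ((k + 20) %% 30).

(* g moves, within each file, subfile p (0-indexed, p<9) to (p+3) mod 9 and
   fixes p = 9; the new position p receives the old position (p+6) mod 9. *)
Definition g_src (k : 'I_30) : 'I_30 :=
  let b := (k %/ 10)%N in let p := (k %% 10)%N in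
  inord (b * 10 + (if p == 9%N then 9 else (p + 6) %% 9))%N.

Definition fmx m (M : 'M['F_2]_(m, 30)) : 'M['F_2]_(m, 30) :=
  \matrix_(i, k) M i (f_src k).
Definition gmx m (M : 'M['F_2]_(m, 30)) : 'M['F_2]_(m, 30) :=
  \matrix_(i, k) M i (g_src k).

Definition Z1 (z : 'M['F_2]_(2, 30)) : 'M['F_2]_(2 + (2 + 2), 30) :=
  col_mx z (col_mx (fmx z) (fmx (fmx z))).
Definition Zmx (z : 'M['F_2]_(2, 30)) (i : 'I_3) : 'M['F_2]_(2 + (2 + 2), 30) :=
  iter i (@gmx _) (Z1 z).

Definition Wmx (j : 'I_3) : 'M['F_2]_(10, 30) :=
  \matrix_(i < 10, k < 30) ((k : nat) == j * 10 + i)%N%:R.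

(* Row space of the stack of W_j (j in S) and Z_i (i in T); its rank is the
   rank of the stacked matrix M(S,T). *)
Definition Mst (z : 'M['F_2]_(2, 30)) (S T : {set 'I_3}) :=
  ((\sum_(j in S) <<Wmx j>>) + (\sum_(i in T) <<Zmx z i>>))%MS.

From mathcomp Require Import all_boot all_order all_algebra all_fingroup zify.
Set Implicit Arguments. Unset Strict Implicit. Unset Printing Implicit Defensive.
Import GRing.Theory.
Local Open Scope ring_scope.

(* f and g act on coefficient vectors as commuting column permutations of
   order 3, and column permutations preserve rank.  f shifts the files, so it
   maps W_j to W_(j+1); it rotates the blocks z, f z, f^2 z of Z_1, so it fixes
   the row space of Z_1 and, commuting with g, that of every Z_i = g^i Z_1.
   g only permutes subfiles inside each file, so it fixes the row space of
   every W_j, and it maps Z_i to Z_(i+1).  Hence rank M(S,T) does not change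
   when S or T is translated in Z/3, and any two subsets of Z/3 of the same
   size are translates of each other (two-element sets via their
   complements). *)

Section ColumnPermutation.
Variables (F : fieldType) (n : nat) (s : 'S_n).

Lemma mxrank_col_perm m (A : 'M[F]_(m, n)) : \rank (col_perm s A) = \rank A.
Proof. by rewrite col_permE mxrankMfree // row_free_unit unitmx_perm. Qed.

Lemma eqmx_col_perm m1 m2 (A : 'M[F]_(m1, n)) (B : 'M[F]_(m2, n)) :
  (A :=: B)%MS -> (col_perm s A :=: col_perm s B)%MS.
Proof. by rewrite !col_permE; apply: eqmxMr. Qed.

Lemma col_perm_adds m1 m2 (A : 'M[F]_(m1, n)) (B : 'M[F]_(m2, n)) :
  (col_perm s (A + B)%MS :=: col_perm s A + col_perm s B)%MS.
Proof. by rewrite !col_permE; apply: addsmxMr. Qed.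

Lemma col_perm_sums_genmx (I : finType) (P : pred I) m1 m2
    (A : I -> 'M[F]_(m1, n)) (B : I -> 'M[F]_(m2, n)) :
    (forall i, P i -> (col_perm s (A i) :=: B i)%MS) ->
  (col_perm s (\sum_(i | P i) <<A i>>)%MS :=: \sum_(i | P i) <<B i>>)%MS.
Proof.
move=> sAB; rewrite col_permE; apply: eqmx_trans (sumsmxMr _ _ _) _.
apply: eqmx_sums => i Pi; rewrite -col_permE.
apply: eqmx_trans (eqmx_col_perm (genmxE _)) _.
exact: eqmx_trans (sAB i Pi) (eqmx_sym (genmxE _)).
Qed.

Lemma col_perm_rowsub_eqmx m (A : 'M[F]_(m, n)) (h : 'I_m -> 'I_m) :
  col_perm s A = rowsub h A -> (col_perm s A :=: A)%MS.
Proof.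
move=> sA; apply/eqmxP; rewrite -(geq_leqif (mxrank_leqif_eq _)) ?mxrank_col_perm //.
by rewrite sA rowsub_sub.
Qed.

Lemma col_perm_col_mx m1 m2 (A : 'M[F]_(m1, n)) (B : 'M[F]_(m2, n)) :
  col_perm s (col_mx A B) = col_mx (col_perm s A) (col_perm s B).
Proof. by rewrite !col_permE mul_col_mx. Qed.

End ColumnPermutation.

Lemma col_mx3_eqmx_adds (F : fieldType) m1 m2 m3 n (A : 'M[F]_(m1, n))
    (B : 'M[F]_(m2, n)) (C : 'M[F]_(m3, n)) :
  (col_mx A (col_mx B C) :=: A + (B + C))%MS.
Proof.
exact: eqmx_sym (eqmx_trans (adds_eqmx (eqmx_refl A) (addsmxE B C)) (addsmxE _ _)).
Qed.

Lemma eqmx_col_mx_rot (F : fieldType) m1 m2 m3 n (A : 'M[F]_(m1, n))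
    (B : 'M[F]_(m2, n)) (C : 'M[F]_(m3, n)) :
  (col_mx A (col_mx B C) :=: col_mx B (col_mx C A))%MS.
Proof.
apply: eqmx_trans (col_mx3_eqmx_adds A B C) _.
by rewrite addsmxC -addsmxA; apply: eqmx_sym (col_mx3_eqmx_adds B C A).
Qed.

Section Translation.
Variable G : finZmodType.
Implicit Types (k : G) (S : {set G}).

Definition translate (k : G) (S : {set G}) : {set G} := [set x | x - k \in S].

Lemma translate0 S : translate 0 S = S.
Proof. by apply/setP => x; rewrite inE subr0. Qed.

Lemma translateD k1 k2 S : translate (k1 + k2) S = translate k2 (translate k1 S).
Proof. by apply/setP => x; rewrite !inE opprD addrA addrAC. Qed.

Lemma translate_set1 k a : translate k [set a] = [set a + k].
Proof. by apply/setP => x; rewrite !inE subr_eq. Qed.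

Lemma translateC k S : translate k (~: S) = ~: translate k S.
Proof. by apply/setP => x; rewrite !inE. Qed.

Lemma big_translate (R : Type) (idx : R) (op : Monoid.com_law idx) k S (F : G -> R) :
  \big[op/idx]_(x in translate k S) F x = \big[op/idx]_(x in S) F (x + k).
Proof. by rewrite (reindex_inj (addIr k)); apply: eq_bigl => x; rewrite inE addrK. Qed.

Lemma translate_small_card S (S' : {set G}) :
  #|S| = #|S'| -> (#|S| <= 1)%N -> exists k, S' = translate k S.
Proof.
move=> eqSS'; rewrite leq_eqVlt ltnS leqn0 => /orP[S1 | /eqP S0].
  have /cards1P[a ->] := S1; have /cards1P[b ->] : #|S'| == 1 by rewrite -eqSS'.
  by exists (b - a); rewrite translate_set1 subrKC.
have S'0 : #|S'| = 0 by rewrite -eqSS'.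
by exists 0; rewrite translate0 (cards0_eq S0) (cards0_eq S'0).
Qed.

Lemma translate_transitive S (S' : {set G}) :
  #|S| = #|S'| -> (#|S| <= 1 \/ #|G| <= #|S|.+1)%N -> exists k, S' = translate k S.
Proof.
move=> eqSS' [small | large]; first exact: translate_small_card.
have [||k eqC] := @translate_small_card (~: S) (~: S').
- by apply/eqP; rewrite -(eqn_add2l #|S|) {2}eqSS' !cardsC.
- by rewrite -(leq_add2l #|S|) cardsC addn1.
by exists k; rewrite -[S']setCK eqC translateC setCK.
Qed.

End Translation.

Lemma translate_invariant p rT (h : {set 'I_p.+2} -> rT) :
  (forall S, h (translate 1 S) = h S) -> forall k S, h (translate k S) = h S.
Proof.
move=> h1 k S; rewrite -(natr_Zp k); elim: (k : nat) => [|i IH]; first by rewrite translate0.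
by rewrite -natr1 translateD h1.
Qed.

Lemma eq_card_translate (S S' : {set 'I_3}) :
  #|S| = #|S'| -> exists k, S' = translate k S.
Proof.
move=> eqSS'; apply: translate_transitive eqSS' _; rewrite card_ord.
by case: (leqP #|S| 1); [left | right].
Qed.

Lemma f_src_val (k : 'I_30) : f_src k = ((k + 20) %% 30)%N :> nat.
Proof. by rewrite inordK // ltn_pmod. Qed.

Lemma g_src_val (k : 'I_30) :
  g_src k = (k %/ 10 * 10 + (if k %% 10 == 9 then 9 else (k %% 10 + 6) %% 9))%N
    :> nat.
Proof. by rewrite inordK //; have := ltn_ord k; case: ifP => _; lia. Qed.

Lemma f_srcK : cancel f_src (f_src \o f_src).
Proof. by move=> k; apply: ord_inj; rewrite /= !f_src_val; have := ltn_ord k; lia. Qed.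

Lemma g_srcK : cancel g_src (g_src \o g_src).
Proof.
move=> k; apply: ord_inj; rewrite /= !g_src_val; have := ltn_ord k.
by do 3!case: ifP; lia.
Qed.

Lemma f_src_g_src k : f_src (g_src k) = g_src (f_src k).
Proof.
apply: ord_inj; rewrite f_src_val !g_src_val f_src_val; have := ltn_ord k.
by do 2!case: ifP; lia.
Qed.

Definition perm_f : 'S_30 := perm (can_inj f_srcK).
Definition perm_g : 'S_30 := perm (can_inj g_srcK).

Lemma fmx_col_perm m (M : 'M['F_2]_(m, 30)) : fmx M = col_perm perm_f M.
Proof. by apply/matrixP => i k; rewrite !mxE permE. Qed.

Lemma gmx_col_perm m (M : 'M['F_2]_(m, 30)) : gmx M = col_perm perm_g M.
Proof. by apply/matrixP => i k; rewrite !mxE permE. Qed.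

Lemma perm_f3 : (perm_f ^+ 3 = 1)%g.
Proof. by apply/permP => k; rewrite permX /= !permE; apply: f_srcK. Qed.

Lemma perm_g3 : (perm_g ^+ 3 = 1)%g.
Proof. by apply/permP => k; rewrite permX /= !permE; apply: g_srcK. Qed.

Lemma commute_perm_f_g : commute perm_f perm_g.
Proof. by apply/permP => k; rewrite !permM !permE f_src_g_src. Qed.

Lemma col_perm_f_Wmx j : col_perm perm_f (Wmx j) = Wmx (j + 1).
Proof.
rewrite -fmx_col_perm; apply/matrixP => i k; rewrite !mxE f_src_val /=.
have := ltn_ord i; have := ltn_ord j; have := ltn_ord k.
by move=> *; congr (nat_of_bool _)%:R; apply/eqP/eqP; lia.
Qed.

Definition subfile_shift (p : 'I_10) : 'I_10 :=
  inord (if p == 9 :> nat then 9 else (p + 3) %% 9)%N.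

Lemma subfile_shift_val p :
  subfile_shift p = (if p == 9 :> nat then 9 else (p + 3) %% 9)%N :> nat.
Proof. by rewrite inordK //; case: ifP => //; rewrite ltnS ltnW // ltn_pmod. Qed.

Lemma col_perm_g_Wmx j : (col_perm perm_g (Wmx j) :=: Wmx j)%MS.
Proof.
apply: (col_perm_rowsub_eqmx (h := subfile_shift)).
rewrite -gmx_col_perm; apply/matrixP => i k; rewrite !mxE g_src_val subfile_shift_val.
have := ltn_ord i; have := ltn_ord j; have := ltn_ord k.
by move=> *; congr (nat_of_bool _)%:R; apply/eqP/eqP; do 2!case: ifP; lia.
Qed.

Lemma Zmx_col_perm z i : Zmx z i = col_perm (perm_g ^+ i) (Z1 z).
Proof.
rewrite /Zmx; elim: (i : nat) => [|n IH] /=; first by rewrite expg0 col_perm1.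
by rewrite IH gmx_col_perm -col_permM -expgS.
Qed.

Lemma col_perm_f_Z1 z : (col_perm perm_f (Z1 z) :=: Z1 z)%MS.
Proof.
rewrite /Z1 !fmx_col_perm !col_perm_col_mx.
rewrite -!col_permM -expg2 -expgS perm_f3 col_perm1.
exact: eqmx_sym (eqmx_col_mx_rot _ _ _).
Qed.

Lemma col_perm_f_Zmx z i : (col_perm perm_f (Zmx z i) :=: Zmx z i)%MS.
Proof.
rewrite Zmx_col_perm -col_permM (commuteX i commute_perm_f_g) col_permM.
exact: eqmx_col_perm (col_perm_f_Z1 z).
Qed.

Lemma col_perm_g_Zmx z i : col_perm perm_g (Zmx z i) = Zmx z (i + 1).
Proof.
rewrite !Zmx_col_perm -col_permM -expgS /=.
by rewrite (expg_mod _ perm_g3) (@modn_small 1 3) ?addn1.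
Qed.

Lemma mxrank_Mst_translate z (s : 'S_30) (a b : 'I_3) (S T : {set 'I_3}) :
  (forall j, (col_perm s (Wmx j) :=: Wmx (j + a)%R)%MS) ->
  (forall i, (col_perm s (Zmx z i) :=: Zmx z (i + b)%R)%MS) ->
  \rank (Mst z (translate a S) (translate b T)) = \rank (Mst z S T).
Proof.
move=> sW sZ; rewrite -(mxrank_col_perm s (Mst z S T)) /Mst !big_translate.
apply/eqmx_rank/eqmxP/eqmx_sym.
apply: eqmx_trans (col_perm_adds _ _ _) _.
by apply: adds_eqmx; apply: col_perm_sums_genmx.
Qed.

Lemma mxrank_Mst_translateW z k S T :
  \rank (Mst z (translate k S) T) = \rank (Mst z S T).
Proof.
move: k S; apply: (translate_invariant (h := fun S => \rank (Mst z S T))) => S /=.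
rewrite -{1}(translate0 T); apply: (mxrank_Mst_translate (s := perm_f)) => [j | i].
  by rewrite col_perm_f_Wmx.
by rewrite addr0; apply: col_perm_f_Zmx.
Qed.

Lemma mxrank_Mst_translateZ z k S T :
  \rank (Mst z S (translate k T)) = \rank (Mst z S T).
Proof.
move: k T; apply: (translate_invariant (h := fun T => \rank (Mst z S T))) => T /=.
rewrite -{1}(translate0 S); apply: (mxrank_Mst_translate (s := perm_g)) => [j | i].
  by rewrite addr0; apply: col_perm_g_Wmx.
by rewrite col_perm_g_Zmx.
Qed.

Theorem proposition1 (z : 'M['F_2]_(2, 30)) (S S' T T' : {set 'I_3}) :
  #|S| = #|S'| -> #|T| = #|T'| -> \rank (Mst z S T) = \rank (Mst z S' T').
Proof.
move=> /eq_card_translate[a ->] /eq_card_translate[b ->].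
by rewrite mxrank_Mst_translateW mxrank_Mst_translateZ.
Qed.
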